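(* Let ${\cal G}^{+a}_{Global}$ denote the class of scheduling games on identical machines of speed $1$ with a global priority list in which every job $i$ has processing-time function $p_i(t)=b_i+at$ with $b_i\ge0$ and a common rate $a>0$. For every integer $m\ge2$ and every real $a>0$ there exists a constant $c=c(m,a)>0$ such that for every integer $n\ge 2m+1$ there is a game in ${\cal G}^{+a}_{Global}$ with $m$ machines and $n$ jobs whose price of anarchy is at least $c\,(1+a)^{n/m}$. That is, $PoA({\cal G}^{+a}_{Global})=\Omega((1+a)^{n/m})$.
   Context: Scheduling game: a finite set $N$ of $n$ jobs (players) and a set $M$ of $m$ machines; machine $j$ has speed $s_j>0$. With a global priority list, all machines share the same bijection $\pi:N\to\{1,\dots,n\}$, and job $u$ has higher priority than $v$ iff $\pi(u)<\pi(v)$. A profile $\sigma\in M^N$ assigns each job to a machine. On machine $j$, the jobs assigned to it, listed in increasing $\pi$-order as $i_1,i_2,\dots$, are processed without idle time: $S_{i_1}(\sigma)=0$, $C_{i_k}(\sigma)=S_{i_k}(\sigma)+p_{i_k}(S_{i_k}(\sigma))/s_j$, $S_{i_{k+1}}(\sigma)=C_{i_k}(\sigma)$. The cost of job $i$ is $C_i(\sigma)$. A pure Nash equilibrium (NE) is a profile in which no job can strictly decrease its completion time by unilaterally changing its machine. Makespan $C_{\max}(\sigma)=\max_iC_i(\sigma)$; $OPT(G)=\min_\sigma C_{\max}(\sigma)$. $PoA(G)=\max_{\sigma\text{ NE}}C_{\max}(\sigma)/OPT(G)$. *)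

From HB Require Import structures.
From mathcomp Require Import all_boot all_order all_algebra all_fingroup.
From mathcomp Require Import reals exp.
Set Implicit Arguments. Unset Strict Implicit. Unset Printing Implicit Defensive.
Import Order.TTheory GRing.Theory Num.Theory.
Local Open Scope ring_scope.

Definition profile (n m : nat) := {ffun 'I_n -> 'I_m}.

Section Sched.
Variables (R : realType) (n m : nat).
(* s : speeds of machines; p : processing-time functions p_i(t);
   pi : global priority list (u has higher priority than v iff pi u < pi v). *)
Variables (s : 'I_m -> R) (p : 'I_n -> R -> R) (pi : {perm 'I_n}).

Definition predecessors (sg : profile n m) (i : 'I_n) : seq 'I_n :=
  sort (fun u v => (pi u <= pi v)%N)
       [seq u <- enum 'I_n | (sg u == sg i) && (pi u < pi i)%N].

Definition start_time (sg : profile n m) (i : 'I_n) : R :=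
  foldl (fun t u => t + p u t / s (sg u)) 0 (predecessors sg i).

Definition completion (sg : profile n m) (i : 'I_n) : R :=
  start_time sg i + p i (start_time sg i) / s (sg i).

Definition deviate (sg : profile n m) (i : 'I_n) (j : 'I_m) : profile n m :=
  [ffun u => if u == i then j else sg u].

Definition is_NE (sg : profile n m) : bool :=
  [forall i : 'I_n, forall j : 'I_m,
     completion sg i <= completion (deviate sg i j) i].

Definition makespan (sg : profile n m) : R :=
  \big[Num.max/0]_(i : 'I_n) completion sg i.

(* OPT = minimum makespan over all profiles (the initial value of the
   fold is the maximum makespan, so this is the true minimum). *)
Definition max_makespan : R :=
  \big[Num.max/0]_(sg : profile n m) makespan sg.

Definition OPT : R :=
  \big[Num.min/max_makespan]_(sg : profile n m) makespan sg.

Definition PoA : R :=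
  \big[Num.max/0]_(sg : profile n m | is_NE sg) (makespan sg / OPT).
End Sched.

(* Take the identity priority list and give only the first m jobs a base time
   of 1, all others 0.  In the round-robin profile (job i on machine i mod m)
   the first m jobs finish at time 1 and every later job starts exactly when
   the job m places before it finishes, so job i finishes at (1 + a)^(i / m).
   It is an equilibrium: moving job i to machine j puts it behind the job of
   the previous round on j, which already finishes at i's current start time.
   Stacking the m unit jobs on one machine and the zero jobs on another keeps
   the makespan below (2 + a)^m, because a zero job started at time 0 takes no
   time.  Hence PoA >= (1 + a)^((n - 1) / m) / (2 + a)^m. *)

From HB Require Import structures.
From mathcomp Require Import all_boot all_order all_algebra all_fingroup.
From mathcomp Require Import reals exp.
From mathcomp Require Import zify lra.
Import Order.TTheory GRing.Theory Num.Theory.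
Set Implicit Arguments. Unset Strict Implicit.
Local Open Scope ring_scope.

Lemma filter_ltn_split (n : nat) (s : seq 'I_n) (P : pred 'I_n) (w i : 'I_n) :
  sorted (fun x y : 'I_n => (x < y)%N) s -> w \in s -> P w -> (w < i)%N ->
  [seq u <- s | P u && (u < i)%N] =
  [seq u <- s | P u && (u < w)%N] ++ w :: [seq u <- s | P u && (w < u < i)%N].
Proof.
move=> + + Pw wi; elim: s => [|x s IH] //=.
rewrite path_sortedE; last by move=> y x' z; apply: ltn_trans.
case/andP=> /allP x_lt s_sorted; rewrite in_cons; case: (eqVneq w x) => [wx _ | wx /= ws].
  subst x; rewrite Pw wi ltnn /=.
  have -> : [seq u <- s | P u && (u < w)%N] = [::].
    rewrite -(filter_pred0 s); apply: eq_in_filter => u /x_lt /= wu.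
    by rewrite ltnNge (ltnW wu) andbF.
  by congr (_ :: _); apply: eq_in_filter => u /x_lt /= ->.
have xw : (x < w)%N := x_lt w ws.
rewrite (IH s_sorted ws) xw (ltn_trans xw wi) /= !andbT.
by rewrite [(w < x)%N]ltnNge (ltnW xw) /= andbF; case: (P x).
Qed.

Lemma sorted_ltn_enum_ord (n : nat) : sorted (fun u v : 'I_n => (u < v)%N) (enum 'I_n).
Proof. by have := iota_ltn_sorted 0 n; rewrite -val_enum_ord sorted_map. Qed.

Lemma eq_modn_leq_addn (m u v : nat) :
  (0 < m)%N -> u = v %[mod m] -> (u < v)%N -> (u + m <= v)%N.
Proof.
move=> m_gt0 e uv.
have : (m %| v - u)%N by rewrite -eqn_mod_dvd ?(ltnW uv) // e.
by move/dvdn_leq; rewrite subn_gt0 => /(_ uv); lia.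
Qed.

Lemma divn_subn_succ (m i : nat) :
  (0 < m)%N -> (m <= i)%N -> (i %/ m = ((i - m) %/ m).+1)%N.
Proof. by move=> m_gt0 mi; rewrite -{1}(subnK mi) divnDr ?dvdnn // divnn m_gt0 addn1. Qed.

Section UnitSpeedsIdentityPriority.
Variables (R : realType) (n m : nat) (p : 'I_n -> R -> R).
Hypothesis p_ge0 : forall i t, 0 <= t -> 0 <= p i t.

Local Notation ones := (fun _ : 'I_m => 1 : R).
Local Notation start := (start_time ones p 1%g).
Local Notation finish := (completion ones p 1%g).

Lemma predecessors_id (sg : profile n m) i :
  predecessors 1%g sg i = [seq u <- enum 'I_n | (sg u == sg i) && (u < i)%N].
Proof.
set id_n : {perm 'I_n} := 1%g.
have id_leq_trans : transitive (fun u v : 'I_n => (id_n u <= id_n v)%N).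
  by move=> y x z; rewrite !perm1; apply: leq_trans.
rewrite /predecessors sorted_sort //; first by apply: eq_filter => u; rewrite !perm1.
apply: sorted_filter => //; apply: sub_sorted (sorted_ltn_enum_ord n) => x y.
by rewrite !perm1; apply: ltnW.
Qed.

Lemma completionE (sg : profile n m) i : finish sg i = start sg i + p i (start sg i).
Proof. by rewrite /completion divr1. Qed.

Local Notation step sg := (fun t u => t + p u t / ones (sg u)).

Lemma foldl_step_ge (sg : profile n m) t l : 0 <= t -> t <= foldl (step sg) t l.
Proof.
elim: l t => [|u l IH] t t_ge0 //=.
have t_le : t <= t + p u t / 1 by rewrite divr1 lerDl p_ge0.
exact: le_trans t_le (IH _ (le_trans t_ge0 t_le)).
Qed.

Lemma start_time_ge0 (sg : profile n m) i : 0 <= start sg i.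
Proof. exact: foldl_step_ge. Qed.

Lemma completion_ge0 (sg : profile n m) i : 0 <= finish sg i.
Proof. by rewrite completionE addr_ge0 ?p_ge0 ?start_time_ge0. Qed.

Lemma start_time_split (sg : profile n m) w i : sg w = sg i -> (w < i)%N ->
  start sg i = foldl (step sg) (finish sg w)
    [seq u <- enum 'I_n | (sg u == sg i) && (w < u < i)%N].
Proof.
move=> sg_wi wi; rewrite /start_time predecessors_id.
rewrite (@filter_ltn_split n _ (fun u => sg u == sg i) w i (sorted_ltn_enum_ord n))
  ?mem_enum ?sg_wi //.
by rewrite foldl_cat /= /completion /start_time predecessors_id sg_wi.
Qed.

Lemma completion_le_start_time (sg : profile n m) w i :
  sg w = sg i -> (w < i)%N -> finish sg w <= start sg i.
Proof.
by move=> sg_wi wi; rewrite (start_time_split sg_wi wi) foldl_step_ge ?completion_ge0.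
Qed.

Lemma start_time_eq_completion (sg : profile n m) w i : sg w = sg i -> (w < i)%N ->
  (forall u : 'I_n, sg u = sg i -> (w < u < i)%N -> False) ->
  start sg i = finish sg w.
Proof.
move=> sg_wi wi between; rewrite (start_time_split sg_wi wi).
rewrite (@eq_filter _ _ pred0) ?filter_pred0 // => u /=.
by apply/negbTE/andP => -[/eqP sg_ui /between]; apply.
Qed.

Lemma start_time_eq0 (sg : profile n m) i :
  (forall u : 'I_n, sg u = sg i -> (u < i)%N -> p u 0 = 0) -> start sg i = 0.
Proof.
move=> idle; rewrite /start_time predecessors_id.
have : {in [seq u <- enum 'I_n | (sg u == sg i) && (u < i)%N], forall u, p u 0 = 0}.
  by move=> u; rewrite mem_filter => /andP[/andP[/eqP sg_ui ui] _]; apply: idle.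
elim: (filter _ _) => //= u l IH idle_ul.
by rewrite idle_ul ?mem_head // mul0r addr0 IH // => v lv; rewrite idle_ul // in_cons lv orbT.
Qed.

Lemma completion_deviate_lt (sg : profile n m) (i w : 'I_n) (j : 'I_m) :
  (w < i)%N -> finish (deviate sg i j) w = finish sg w.
Proof.
move=> wi; suff start_eq : start (deviate sg i j) w = start sg w.
  by rewrite !completionE start_eq.
have ne_i (u : 'I_n) : (u <= w)%N -> (u == i) = false.
  by move=> uw; apply/negbTE; rewrite neq_ltn (leq_ltn_trans uw wi).
rewrite /start_time !predecessors_id.
congr (foldl _ 0 _); apply: eq_filter => u.
rewrite /deviate !ffunE (ne_i w (leqnn w)).
case: (ltnP u w) => uw; last by rewrite !andbF.
by rewrite (ne_i u (ltnW uw)).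
Qed.

Lemma is_NE_of_start_time_le (sg : profile n m) :
  (forall i, {homo p i : x y / x <= y}) ->
  (forall i j, start sg i <= start (deviate sg i j) i) -> is_NE ones p 1%g sg.
Proof.
move=> p_homo start_le; apply/forallP => i; apply/forallP => j.
by rewrite !completionE; apply: lerD; last apply: p_homo; apply: start_le.
Qed.

End UnitSpeedsIdentityPriority.

Section Efficiency.
Variables (R : realType) (n m : nat) (s : 'I_m -> R) (p : 'I_n -> R -> R).
Variable pi : {perm 'I_n}.

Lemma OPT_le_makespan (sg : profile n m) : OPT s p pi <= makespan s p pi sg.
Proof. exact: bigmin_le. Qed.

Lemma le_OPT (c : R) : (0 < m)%N ->
  (forall sg, c <= makespan s p pi sg) -> c <= OPT s p pi.
Proof.
move=> m_gt0 c_le; pose sg0 : profile n m := [ffun=> Ordinal m_gt0].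
apply: le_bigmin => //; exact: le_trans (c_le sg0) (le_bigmax _ _ sg0).
Qed.

Lemma PoA_ge_NE (sg : profile n m) :
  is_NE s p pi sg -> makespan s p pi sg / OPT s p pi <= PoA s p pi.
Proof. exact: le_bigmax_cond. Qed.

End Efficiency.

Section ExponentialInstance.
Variables (R : realType) (n m : nat) (a : R).
Hypotheses (m_gt1 : (1 < m)%N) (a_gt0 : 0 < a).

Definition head_weight (i : 'I_n) : R := if (i < m)%N then 1 else 0.

Lemma head_weight_ge0 i : 0 <= head_weight i.
Proof. by rewrite /head_weight; case: ifP. Qed.

Local Notation p := (fun i t => head_weight i + a * t).
Local Notation ones := (fun _ : 'I_m => 1 : R).
Local Notation start := (start_time ones p 1%g).
Local Notation finish := (completion ones p 1%g).

Let m_gt0 : (0 < m)%N := ltnW m_gt1.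

(* [lra] and [nra] ignore section hypotheses, hence [have := a_gt0] below. *)
Let two_plus_a_ge1 : 1 <= 2 + a.
Proof. by have := a_gt0; lra. Qed.

Let p_ge0 i t : 0 <= t -> 0 <= p i t.
Proof. by move=> t_ge0; rewrite addr_ge0 ?head_weight_ge0 // mulr_ge0 // ltW. Qed.

Let p_homo i : {homo p i : x y / x <= y}.
Proof. by move=> x y xy; rewrite lerD2l ler_wpM2l // ltW. Qed.

Definition round_robin : profile n m := [ffun i : 'I_n => Ordinal (ltn_pmod i (ltnW m_gt1))].

Lemma round_robin_eq (u v : 'I_n) : round_robin u = round_robin v <-> u = v %[mod m].
Proof. by rewrite !ffunE; split => [/(congr1 val) | e] //; apply: val_inj. Qed.

Definition prev_job (i : 'I_n) : 'I_n := Ordinal (leq_ltn_trans (leq_subr m i) (ltn_ord i)).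

Lemma round_robin_start_prev (i : 'I_n) :
  (m <= i)%N -> start round_robin i = finish round_robin (prev_job i).
Proof.
move=> mi; apply: start_time_eq_completion => /=.
- by apply/round_robin_eq; rewrite /= -{2}(subnK mi) modnDr.
- by rewrite ltn_subrL m_gt0 (leq_trans m_gt0 mi).
- move=> u /round_robin_eq u_i /andP[wu ui].
  have w_u : i - m = u %[mod m] by rewrite u_i -[in RHS](subnK mi) modnDr.
  by have := eq_modn_leq_addn m_gt0 w_u wu; lia.
Qed.

Lemma round_robin_start_head (i : 'I_n) : (i < m)%N -> start round_robin i = 0.
Proof.
move=> im; apply: start_time_eq0 => u /round_robin_eq + ui.
by rewrite !modn_small ?(ltn_trans ui im) // => /val_inj u_i; rewrite u_i ltnn in ui.
Qed.

Lemma round_robin_completion (i : 'I_n) : finish round_robin i = (1 + a) ^+ (i %/ m).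
Proof.
have [k] := ubnP i; elim: k i => // k IH i ik; rewrite completionE.
case: (ltnP i m) => im.
  by rewrite round_robin_start_head // /head_weight im divn_small // mulr0 addr0 add0r.
rewrite round_robin_start_prev // IH /=; last by lia.
by rewrite /head_weight ltnNge im add0r (divn_subn_succ m_gt0 im) exprS mulrDl mul1r mulrC.
Qed.

Lemma round_robin_start (i : 'I_n) :
  (m <= i)%N -> start round_robin i = (1 + a) ^+ (i %/ m).-1.
Proof.
by move=> mi; rewrite round_robin_start_prev // round_robin_completion (divn_subn_succ m_gt0 mi).
Qed.

Lemma round_robin_NE : is_NE ones p 1%g round_robin.
Proof.
apply: is_NE_of_start_time_le => // i j; set dev := deviate round_robin i j.
have [im | mi] := ltnP i m; first by rewrite round_robin_start_head ?start_time_ge0.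
have q_gt0 : (0 < i %/ m)%N by rewrite divn_gt0.
have lt_i : ((i %/ m).-1 * m + j < i)%N.
  apply: leq_trans (leq_trunc_div i m).
  by rewrite -{2}(prednK q_gt0) mulSn; have := ltn_ord j; lia.
pose w : 'I_n := Ordinal (ltn_trans lt_i (ltn_ord i)).
have dev_wi : dev w = dev i.
  rewrite /dev /deviate !ffunE eqxx ifN_eq ?neq_ltn ?lt_i //.
  by apply: val_inj; rewrite /= modnMDl modn_small.
apply: le_trans (completion_le_start_time p_ge0 dev_wi lt_i).
rewrite completion_deviate_lt // round_robin_completion round_robin_start //=.
by rewrite divnMDl // (divn_small (ltn_ord j)) addn0.
Qed.

Definition stacked : profile n m :=
  [ffun i : 'I_n => if (i < m)%N then Ordinal (ltnW m_gt1) else Ordinal m_gt1].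

Lemma stacked_eq (u v : 'I_n) : stacked u = stacked v <-> (u < m)%N = (v < m)%N.
Proof.
rewrite !ffunE; split => [|->] //.
by case: (u < m)%N; case: (v < m)%N => // /(congr1 val).
Qed.

Lemma stacked_tail_completion (i : 'I_n) : (m <= i)%N -> finish stacked i = 0.
Proof.
move=> mi; have tail_weight (u : 'I_n) : (m <= u)%N -> head_weight u = 0.
  by move=> mu; rewrite /head_weight ltnNge mu.
have start0 : start stacked i = 0.
  apply: start_time_eq0 => u /stacked_eq + _; rewrite [(i < m)%N]ltnNge mi => /negbT.
  by rewrite -leqNgt => /tail_weight ->; rewrite mulr0 addr0.
by rewrite completionE start0 tail_weight // mulr0 !addr0.
Qed.

Lemma stacked_head_completion (i : 'I_n) :
  (i < m)%N -> finish stacked i <= (2 + a) ^+ i.+1.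
Proof.
move: i; suff head_bound k : forall i : 'I_n, i = k :> nat -> (i < m)%N ->
    finish stacked i <= (2 + a) ^+ k.+1 by move=> i; apply: head_bound.
elim: k => [|k IH] i ik im; rewrite completionE /head_weight im.
  rewrite start_time_eq0 => [|u _]; last by rewrite ik.
  by rewrite mulr0 !addr0 add0r expr1.
have lt_k : (k < n)%N by have := ltn_ord i; lia.
pose w : 'I_n := Ordinal lt_k.
have wm : (w < m)%N by rewrite /=; lia.
rewrite (@start_time_eq_completion _ _ _ _ _ w) /=; first last.
- by move=> u _; rewrite ik; lia.
- by rewrite ik.
- by apply/stacked_eq; rewrite wm im.
have := IH w erefl wm; set c := finish stacked w => c_le.
have pow_ge1 : 1 <= (2 + a) ^+ k.+1 by rewrite exprn_ege1.
by rewrite exprS; have := a_gt0; nra.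
Qed.

Lemma stacked_makespan : makespan ones p 1%g stacked <= (2 + a) ^+ m.
Proof.
have bound_ge0 : 0 <= (2 + a) ^+ m by rewrite exprn_ge0 // (le_trans ler01).
apply: bigmax_le => // i _; have [im | mi] := ltnP i m.
  exact: le_trans (stacked_head_completion im) (ler_weXn2l two_plus_a_ge1 im).
by rewrite stacked_tail_completion.
Qed.

Lemma makespan_ge1 (sg : profile n m) : (0 < n)%N -> 1 <= makespan ones p 1%g sg.
Proof.
move=> n_gt0; pose i0 : 'I_n := Ordinal n_gt0.
apply: le_trans (le_bigmax _ _ i0); rewrite completionE /head_weight /= m_gt0.
have := start_time_ge0 p_ge0 sg i0; have := a_gt0; nra.
Qed.

Lemma round_robin_makespan (n_gt0 : (0 < n)%N) :
  (1 + a) ^+ (n.-1 %/ m) <= makespan ones p 1%g round_robin.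
Proof.
have last_lt : (n.-1 < n)%N by rewrite ltn_predL.
pose last_job : 'I_n := Ordinal last_lt.
by rewrite -(round_robin_completion last_job); apply: le_bigmax.
Qed.

Lemma exponential_PoA : (0 < n)%N ->
  (1 + a) ^+ (n.-1 %/ m) / (2 + a) ^+ m <= PoA ones p 1%g.
Proof.
move=> n_gt0; apply: le_trans (PoA_ge_NE round_robin_NE).
have OPT_gt0 : 0 < OPT ones p 1%g.
  by apply: lt_le_trans ltr01 _; apply: le_OPT => // sg; apply: makespan_ge1.
have OPT_le : OPT ones p 1%g <= (2 + a) ^+ m :=
  le_trans (OPT_le_makespan _ _ _ _) stacked_makespan.
apply: le_trans (ler_wpM2r _ (round_robin_makespan n_gt0)); last first.
  by rewrite invr_ge0 ltW.
apply: ler_wpM2l; first by rewrite exprn_ge0 // addr_ge0 // ltW.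
by rewrite lef_pV2 ?posrE // exprn_gt0 // (lt_le_trans ltr01).
Qed.

End ExponentialInstance.

Lemma ratio_le_succ_divn_pred (R : realFieldType) (n m : nat) :
  (0 < m)%N -> n%:R / m%:R <= (n.-1 %/ m).+1%:R :> R.
Proof.
move=> m_gt0; rewrite ler_pdivrMr ?ltr0n // -natrM ler_nat.
by have := ltn_ceil n.-1 m_gt0; lia.
Qed.

Unset Implicit Arguments.
Set Strict Implicit.

Theorem theorem10 (R : realType) (m : nat) (a : R) :
  (2 <= m)%N -> 0 < a ->
  exists c : R, 0 < c /\
    forall n : nat, (2 * m + 1 <= n)%N ->
      exists (b : 'I_n -> R) (pi : {perm 'I_n}),
        (forall i, 0 <= b i) /\
        c * (1 + a) `^ (n%:R / m%:R) <=
          PoA (fun _ : 'I_m => 1) (fun i t => b i + a * t) pi.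
Proof.
move=> m_ge2 a_gt0; have growth_gt0 : 0 < (2 + a) ^+ m by rewrite exprn_gt0 //; lra.
exists ((1 + a) * (2 + a) ^+ m)^-1; split; first by rewrite invr_gt0 mulr_gt0 //; lra.
move=> n n_ge; have n_gt0 : (0 < n)%N by lia.
exists (@head_weight R n m), 1%g; split; first exact: head_weight_ge0.
apply: le_trans (exponential_PoA m_ge2 a_gt0 n_gt0).
have pow_le : (1 + a) `^ (n%:R / m%:R) <= (1 + a) ^+ (n.-1 %/ m).+1.
  rewrite -powR_mulrn; last by lra.
  by apply: ler_powR; [lra | apply: ratio_le_succ_divn_pred; lia].
apply: le_trans (ler_wpM2l _ pow_le) _; first by rewrite invr_ge0 ltW // mulr_gt0 //; lra.
have a1_neq0 : 1 + a != 0 by rewrite gt_eqF //; lra.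
by rewrite exprS invfM mulrACA mulVf // mul1r mulrC.
Qed.
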